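(* Let $\epsilon\in(0,1/4)$. There is $n_0(\epsilon)$ such that the following holds for $n\ge n_0$. Let $G$ be a graph on $n$ vertices with minimum degree $\delta$, where $\delta\ge(\ln n)^{2/\epsilon}(\ln\ln n)^{1/\epsilon}$, and assume $s^*=\delta^{1/2+\epsilon}$ and $k=\delta^{1/2-\epsilon}/\ln\ln n$ are integers. With the random partition $V(G)=B\cup S$, $S=S_1\cup\dots\cup S_k$ described in the context, with probability at least $1-1/n^2$ we have $|L(v)|\le\frac{42\,n\deg(v)\ln n}{k\,\delta^{1+\epsilon}}$ for every $v\in S$.
   Context: Graphs are finite and simple; $\deg(v)$ is the degree of $v$ in $G$; $\ln$ is the natural logarithm. Random partition: let $X_v$, $v\in V(G)$, be i.i.d. uniform on $[0,1]$. For each integer $1\le i\le\delta-s^*$, put $v$ in $B_i$ if $X_v\in[\frac{i-1}{\delta},\frac{i}{\delta})$. For $1\le j\le k-1$, put $v$ in $S_j$ if $X_v\in\left[\frac{\delta-s^*}{\delta}+\frac{(j-1)s^*}{\delta k},\frac{\delta-s^*}{\delta}+\frac{js^*}{\delta k}\right)$, and put $v$ in $S_k$ if $X_v\in\left[\frac{\delta-s^*}{\delta}+\frac{(k-1)s^*}{\delta k},1\right]$. Let $B=\bigcup_iB_i$, $S=\bigcup_jS_j$. For $v\in S_i$ define the interval $I_{v,i}=\left[\deg(v)\left(1-\frac{4s^*i}{\delta}-\frac{34\ln n}{\delta^{\epsilon}}\right),\ \deg(v)\left(1-\frac{4s^*i}{\delta}+\frac{3s^*}{\delta}\right)\right]$.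 For $v\in S_i$, $L(v)$ is the set of vertices $u\in S$, $u\ne v$, such that $u\in S_j$ with $I_{v,i}\cap I_{u,j}\neq\emptyset$. *)

From HB Require Import structures.
From mathcomp Require Import all_boot all_order all_algebra.
From mathcomp Require Import all_classical all_reals all_analysis.
Set Implicit Arguments. Unset Strict Implicit. Unset Printing Implicit Defensive.
Import Order.TTheory GRing.Theory Num.Theory.
Local Open Scope classical_set_scope.
Local Open Scope ring_scope.

Definition simple_graph (T : finType) (e : rel T) : Prop :=
  symmetric e /\ irreflexive e.

Definition deg (T : finType) (e : rel T) (v : T) : nat := #|[set u | e v u]|.

Definition is_min_degree (T : finType) (e : rel T) (delta : nat) : Prop :=
  (forall v, (delta <= deg e v)%N) /\ exists v, deg e v = delta.

Section Partition.
Variables (R : realType) (delta s k : nat).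
(* X_v = x lies in S_j (1 <= j <= k) *)
Definition inS (j : nat) (x : R) : bool :=
  let lo := (delta%:R - s%:R) / delta%:R + (j%:R - 1) * s%:R / (delta%:R * k%:R) in
  let hi := (delta%:R - s%:R) / delta%:R + j%:R * s%:R / (delta%:R * k%:R) in
  [&& (1 <= j)%N, (j <= k)%N, lo <= x &
      if (j < k)%N then x < hi else x <= 1].

(* X_v = x lies in B_i (1 <= i <= delta - s) *)
Definition inB (i : nat) (x : R) : bool :=
  [&& (1 <= i)%N, (i <= delta - s)%N,
      (i%:R - 1) / delta%:R <= x & x < i%:R / delta%:R].

Variable eps : R.
(* endpoints of the interval I_{v,i}, where dv = deg(v) and n = |V(G)| *)
Definition Ilo (n dv i : nat) : R :=
  dv%:R * (1 - 4%:R * s%:R * i%:R / delta%:R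
             - 34%:R * ln (n%:R) / (delta%:R `^ eps)).
Definition Ihi (dv i : nat) : R :=
  dv%:R * (1 - 4%:R * s%:R * i%:R / delta%:R + 3%:R * s%:R / delta%:R).

Definition inter_nonempty (a1 b1 a2 b2 : R) : Prop :=
  exists y : R, a1 <= y <= b1 /\ a2 <= y <= b2.

(* L(v) for v in S_i, given the realization x of (X_u)_u *)
Definition Lset (T : finType) (e : rel T) (x : T -> R) (v : T) (i : nat) : {set T} :=
  [set u | `[< u <> v /\ exists j, inS j (x u) /\
     inter_nonempty (Ilo #|T| (deg e v) i) (Ihi (deg e v) i)
                    (Ilo #|T| (deg e u) j) (Ihi (deg e u) j) >]].
End Partition.

Definition mutually_independent d (Omega : measurableType d) (R : realType)
    (P : probability Omega R) (V : finType) (X : V -> {RV P >-> R}) : Prop :=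
  forall (J : {set V}) (A : V -> set R), (forall j, measurable (A j)) ->
    P (\bigcap_(j in [set j | j \in J]) (X j @^-1` A j)) =
    (\prod_(j in J) P (X j @^-1` A j))%E.

Definition uniform01 d (Omega : measurableType d) (R : realType)
    (P : probability Omega R) (X : {RV P >-> R}) : Prop :=
  forall A : set R, measurable A ->
    distribution P X A = uniform_prob (@ltr01 R) A.

From HB Require Import structures.
From mathcomp Require Import all_boot all_order all_algebra.
From mathcomp Require Import all_classical all_reals all_analysis.
From mathcomp Require Import ring lra measurable_realfun.
Set Implicit Arguments. Unset Strict Implicit. Unset Printing Implicit Defensive.
Import Order.TTheory GRing.Theory Num.Theory.
Local Open Scope classical_set_scope.
Local Open Scope ring_scope.

(* Record for each vertex [u] the index of the part [S_j] containing [X u]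
   ([0] if it lies in [B]); the event is then a finite union of atoms of a
   product distribution. For fixed [v] and [i], [|L(v)|] counts independent
   events: a vertex [u] contributes only through the few consecutive indices [j]
   whose interval [I_{u,j}] meets [I_{v,i}], each of probability at most
   [s* / (delta k)], so the mean of [|L(v)|] is far below the target bound [b].
   The Chernoff bound [P(Z > b) <= exp(E Z - b/2)] then yields probability at
   most [n^-4] for each of the at most [n^2] pairs [(v, i)]. *)

Lemma expR_inv2_le2 (R : realType) : expR (2^-1 : R) <= 2.
Proof.
have h := expR_ge1Dx (- (2^-1 : R)); rewrite expRN in h.
have p := expR_gt0 (2^-1 : R).
have h2 : (2^-1 : R) <= (expR (2^-1))^-1 by lra.
have h3 : 2^-1 * expR (2^-1 : R) <= 1.
  by rewrite -[X in _ <= X](mulVf (lt0r_neq0 p)) ler_wpM2r // ltW.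
lra.
Qed.

Section FiniteChernoff.
Variables (R : realType) (V I : finType) (q : V -> I -> R).
Hypotheses (q_ge0 : forall u j, 0 <= q u j) (q_sum1 : forall u, \sum_j q u j = 1).
Variables (g : V -> I -> bool) (b : R).

Lemma natr_card_set_sum (f : {ffun V -> I}) :
  (#|[set u | g u (f u)]%SET|%:R : R) = \sum_u (g u (f u))%:R.
Proof.
rewrite -sum1_card natr_sum big_mkcond /=; apply: eq_bigr => u _.
by rewrite inE; case: (g u (f u)).
Qed.

(* Exponential moment with parameter 1/2, using [1 + q (e^(1/2) - 1) <= 1 + q <= e^q]. *)
Lemma chernoff_ffun :
  \sum_(f : {ffun V -> I} | b < #|[set u | g u (f u)]%SET|%:R) \prod_u q u (f u)
  <= expR (\sum_u \sum_(j | g u j) q u j - b / 2).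
Proof.
have prod_ge0 f : 0 <= \prod_u q u (f u) by apply: prodr_ge0.
apply: (@le_trans _ _ (\sum_(f : {ffun V -> I})
   expR (- b / 2) * \prod_u (q u (f u) * expR ((g u (f u))%:R / 2)))).
  rewrite big_mkcond /=; apply: ler_sum => f _.
  rewrite big_split /= -expR_sum mulrCA -expRD.
  case: ifP => hf; last by rewrite mulr_ge0 ?expR_ge0.
  rewrite ler_peMr // -[X in X <= _]expR0 ler_expR -mulr_suml -natr_card_set_sum.
  move: hf; lra.
rewrite -mulr_sumr -(bigA_distr_bigA (fun u j => q u j * expR ((g u j)%:R / 2))) /=.
apply: (@le_trans _ _ (expR (- b / 2) * \prod_u expR (\sum_(j | g u j) q u j))); last first.
  by rewrite -expR_sum -expRD addrC ler_expR mulNr.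
rewrite ler_pM2l ?expR_gt0 //; apply: ler_prod => u _.
rewrite sumr_ge0 /=; last by move=> j _; rewrite mulr_ge0 ?expR_ge0.
apply: (@le_trans _ _ (1 + \sum_(j | g u j) q u j)); last exact: expR_ge1Dx.
rewrite -[X in _ <= X + _](q_sum1 u) (big_mkcond (fun j => g u j)) -big_split /=.
apply: ler_sum => j _; case: (g u j) => /=; last by rewrite mul0r expR0 mulr1 addr0.
have := expR_inv2_le2 R; have := q_ge0 u j; rewrite mul1r; nra.
Qed.

End FiniteChernoff.

Lemma card_scaled_window (R : realFieldType) m (P : pred 'I_m) (a x y : R) :
  0 < a -> x <= y -> (forall j : 'I_m, P j -> x <= a * (j : nat)%:R <= y) ->
  (#|[set j | P j]%SET|%:R : R) <= (y - x) / a + 1.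
Proof.
move=> a0 xy hP.
have h0 : 0 <= (y - x) / a by rewrite divr_ge0 ?subr_ge0 // ltW.
case: (pickP P) => [j0 Pj0|none]; last first.
  have -> : #|[set j | P j]%SET| = 0%N by apply: eq_card0 => j; rewrite inE none.
  lra.
case: (arg_minnP (fun j : 'I_m => (j : nat)) Pj0) => jm Pjm minj.
case: (arg_maxnP (fun j : 'I_m => (j : nat)) Pj0) => jM PjM maxj.
have jmM : (jm <= jM)%N by apply: maxj.
have card_le : (#|[set j | P j]%SET| <= (jM - jm).+1)%N.
  rewrite cardE -(size_map val) -[X in (_ <= X)%N](size_iota jm).
  apply: uniq_leq_size; first by rewrite map_inj_uniq ?enum_uniq //; exact: val_inj.
  move=> z /mapP[j]; rewrite mem_enum inE => Pj ->.
  by rewrite mem_iota minj //= addnS ltnS subnKC //; apply: maxj.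
apply: (le_trans (_ : _ <= ((jM - jm).+1)%:R)); first by rewrite ler_nat.
have /andP[_ hM] := hP _ PjM; have /andP[hm _] := hP _ Pjm.
rewrite -addn1 natrD natrB // lerD2r ler_pdivlMr // mulrBl mulrC [X in _ - X]mulrC.
lra.
Qed.

(* The overlap conditions for indices [j] against the fixed index [iR] confine
   [A * du * j] to a window of length [(H + c) * (du + dv)], and [dv <= 11/10 * du]. *)
Lemma card_overlapping_indices (R : realFieldType) m (P : pred 'I_m)
    (A H c du dv iR : R) :
  0 < A -> 0 <= H -> H <= 3/100 -> 0 <= c -> c <= 1/100 -> A * iR <= 4/100 ->
  0 < du -> 0 <= dv ->
  (forall j : 'I_m, P j ->
     du * (1 - A * (j : nat)%:R - c) <= dv * (1 - A * iR + H) /\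
     dv * (1 - A * iR - c) <= du * (1 - A * (j : nat)%:R + H)) ->
  (#|[set j | P j]%SET|%:R : R) <= 21/10 * (H + c) / A + 1.
Proof.
move=> A0 H0 H1 c0 c1 Ai du0 dv0 hP.
have hr : 0 <= 21/10 * (H + c) / A by rewrite divr_ge0 ?mulr_ge0 ?addr_ge0 // ltW.
case: (pickP P) => [j0 Pj0|none]; last first.
  have -> : #|[set j | P j]%SET| = 0%N by apply: eq_card0 => j; rewrite inE none.
  lra.
have Aj_ge0 (j : 'I_m) : 0 <= A * (j : nat)%:R by rewrite mulr_ge0 // ltW.
have dv_le : dv <= 11/10 * du.
  have [_ h] := hP _ Pj0; have := Aj_ge0 j0.
  have : dv * (95/100) <= dv * (1 - A * iR - c) by rewrite ler_wpM2l //; lra.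
  nra.
pose x := du * (1 - c) - dv * (1 - A * iR + H).
pose y := du * (1 + H) - dv * (1 - A * iR - c).
have yBx : y - x = (H + c) * (du + dv) by rewrite /x /y; ring.
have xy : x <= y by rewrite -subr_ge0 yBx mulr_ge0 ?addr_ge0 // ltW.
have window : forall j : 'I_m, P j -> x <= A * du * (j : nat)%:R <= y.
  move=> j /hP[h1 h2]; rewrite /x /y; apply/andP; split; lra.
apply: (le_trans (card_scaled_window (mulr_gt0 A0 du0) xy window)).
rewrite lerD2r yBx ler_pdivrMr ?mulr_gt0 //.
have -> : 21 / 10 * (H + c) / A * (A * du) = 21/10 * (H + c) * du.
  by field; rewrite gt_eqF.
nra.
Qed.

Lemma chernoff_exponent_le (R : realFieldType) (N D s k L lnN De dv : R) :
  0 < D -> 0 < s -> 1 <= k -> 100 <= L -> 1 <= lnN -> 0 < De -> D <= dv ->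
  s * De <= D -> k * De * L <= D -> D <= N ->
  N * (2575/1000 * (s / (D * k)) + 525/1000 * (34 * lnN / De) / k)
   - (42 * N * dv * lnN / (k * (D * De))) / 2 <= -4 * lnN.
Proof.
move=> D0 s0 k1 L100 l1 De0 Ddv sDe kDeL DN.
have k0 : 0 < k by lra.
have N0 : 0 < N by lra.
set Q := N / (De * k).
have Q0 : 0 < Q by rewrite /Q divr_gt0 // mulr_gt0.
set a := N * (s / (D * k)).
have -> : N * (2575/1000 * (s / (D * k)) + 525/1000 * (34 * lnN / De) / k)
   - (42 * N * dv * lnN / (k * (D * De))) / 2 =
   2575/1000 * a + 525/1000 * 34 * (Q * lnN) - 21 * (Q * lnN) * (dv / D).
  by rewrite /a /Q; field; rewrite ?gt_eqF.
have a_le : a <= Q.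
  have -> : a = Q * (s * De / D) by rewrite /a /Q; field; rewrite ?gt_eqF.
  rewrite -[X in _ <= X]mulr1 ler_wpM2l //; first exact: ltW.
  by rewrite ler_pdivrMr // mul1r.
have dvD : 1 <= dv / D by rewrite ler_pdivlMr // mul1r.
have Q100 : 100 <= Q.
  rewrite /Q ler_pdivlMr ?mulr_gt0 //.
  have : 0 <= k * De by rewrite mulr_ge0 // ltW.
  nra.
have : Q <= Q * lnN by rewrite -[X in X <= _]mulr1 ler_wpM2l // ltW.
have : 100 * lnN <= Q * lnN by rewrite ler_wpM2r // (le_trans ler01).
have : Q * lnN <= Q * lnN * (dv / D).
  have : 0 <= Q * lnN by rewrite mulr_ge0 // ltW // (lt_le_trans ltr01).
  nra.
lra.
Qed.

Section ParameterBounds.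
Variables (R : realType) (eps : R) (n delta s k : nat).
Hypotheses (eps_gt0 : 0 < eps) (eps_lt : eps < 4%:R^-1).
Hypothesis n_large : expR (expR 100) < (n%:R : R).
Hypothesis delta_large :
  ln (n%:R : R) `^ (2%:R / eps) * ln (ln (n%:R : R)) `^ (1 / eps) <= delta%:R.
Hypothesis s_def : (s%:R : R) = delta%:R `^ (2%:R^-1 + eps).
Hypothesis k_def : (k%:R : R) = delta%:R `^ (2%:R^-1 - eps) / ln (ln (n%:R : R)).
Hypothesis delta_le_n : (delta <= n)%N.

Local Notation N := (n%:R : R).
Local Notation D := (delta%:R : R).

Lemma expR100_ge100 : 100 <= expR (100 : R).
Proof. by apply: le_trans (expR_ge1Dx _); lra. Qed.

Lemma ln_n_gt_expR100 : expR 100 < ln N.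
Proof.
rewrite -[X in X < _](expRK (expR 100)) ltr_ln ?posrE ?expR_gt0 //.
exact: lt_trans (expR_gt0 _) n_large.
Qed.

Lemma ln_n_ge100 : 100 <= ln N.
Proof. by have := ln_n_gt_expR100; have := expR100_ge100; lra. Qed.

Lemma lnln_n_ge100 : 100 <= ln (ln N).
Proof.
rewrite -[X in X <= _](expRK 100) ler_ln ?posrE ?expR_gt0 ?ltW ?ln_n_gt_expR100 //.
exact: lt_trans (expR_gt0 _) ln_n_gt_expR100.
Qed.

Lemma delta_ge1 : 1 <= D.
Proof.
have pow_ge1 (x a : R) : 1 <= x -> 0 < a -> 1 <= x `^ a.
  by move=> x1 a0; rewrite -[X in X <= _](powRr0 x) ler_powR // ltW.
apply: le_trans delta_large; rewrite -[X in X <= _]mulr1.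
have := ln_n_ge100; have := lnln_n_ge100 => L100 l100.
apply: ler_pM => //; apply: pow_ge1; rewrite ?divr_gt0 //.
all: lra.
Qed.

Lemma delta_gt0 : (0 < delta)%N.
Proof. by rewrite -(ler1n R) delta_ge1. Qed.

Let D_neq0 : D != 0.
Proof. by rewrite pnatr_eq0 -lt0n delta_gt0. Qed.

Let D_pow1 : D `^ 1 = D.
Proof. by rewrite powRr1 // ler0n. Qed.

Lemma s_gt0 : 0 < (s%:R : R).
Proof. by rewrite s_def powR_gt0 // ltr0n delta_gt0. Qed.

Lemma k_ge1 : 1 <= (k%:R : R).
Proof.
have : 0 < (k%:R : R).
  rewrite k_def divr_gt0 ?powR_gt0 ?ltr0n ?delta_gt0 //.
  by have := lnln_n_ge100; lra.
by rewrite ltr0n ler1n.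
Qed.

Lemma k_gt0 : (0 < k)%N.
Proof. by rewrite -(ler1n R) k_ge1. Qed.

Let lnln_neq0 : ln (ln N) != 0.
Proof. by rewrite gt_eqF //; have := lnln_n_ge100; lra. Qed.

Lemma s_k_lnlnE : s%:R * k%:R * ln (ln N) = D.
Proof.
rewrite s_def k_def mulrA divfK // -powRD ?D_neq0 ?implybT //.
by have -> : 2%:R^-1 + eps + (2%:R^-1 - eps) = 1 :> R by field.
Qed.

Lemma s_powR_le : s%:R * D `^ eps <= D.
Proof.
rewrite s_def -powRD ?D_neq0 ?implybT // -[X in _ <= X]D_pow1.
by apply: ler_powR; rewrite ?delta_ge1 //; have := eps_lt; lra.
Qed.

Lemma k_powR_lnln_le : k%:R * D `^ eps * ln (ln N) <= D.
Proof.
rewrite k_def mulrAC divfK // -powRD ?D_neq0 ?implybT // -[X in _ <= X]D_pow1.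
by apply: ler_powR; rewrite ?delta_ge1 //; have := eps_gt0; lra.
Qed.

Lemma ln_sqr_lnln_le : ln N ^+ 2 * ln (ln N) <= D `^ eps.
Proof.
have lnN0 : 0 <= ln N by have := ln_n_ge100; lra.
have L0 : 0 <= ln (ln N) by have := lnln_n_ge100; lra.
have := ge0_ler_powR (ltW eps_gt0) _ _ delta_large.
rewrite !nnegrE => /(_ (mulr_ge0 (powR_ge0 _ _) (powR_ge0 _ _)) (ler0n _ _)).
rewrite powRM ?powR_ge0 // -!powRrM.
have -> : 2%:R / eps * eps = 2%:R by field; rewrite gt_eqF.
have -> : 1 / eps * eps = 1 by field; rewrite gt_eqF.
by rewrite powR_mulrn // powRr1.
Qed.

Lemma ln_n_le_powR : 34 * ln N <= 1/100 * D `^ eps.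
Proof.
have := ln_sqr_lnln_le; have := ln_n_ge100; have := lnln_n_ge100.
set l := ln N; set L := ln (ln N) => L100 l100 h.
have : 100 * l <= l ^+ 2 by rewrite expr2 ler_wpM2r //; lra.
have : l ^+ 2 * 100 <= l ^+ 2 * L by rewrite ler_wpM2l // sqr_ge0.
lra.
Qed.

Lemma kS_le_n : (k.+1%:R : R) <= N.
Proof.
have := k_powR_lnln_le; have := ln_sqr_lnln_le; have := lnln_n_ge100.
have := ln_n_ge100; have := k_ge1; have := expR100_ge100.
have := expR_ge1Dx (expR 100 : R); have := n_large; have : D <= N by rewrite ler_nat.
set De := D `^ eps; set L := ln (ln N); set l := ln N.
move=> DN nl e1 e100 k1 l100 L100 hDe hkD.
have l1 : 1 <= l ^+ 2 by rewrite expr2; nra.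
have De1 : 1 <= De by nra.
have : (k%:R : R) * 100 <= k%:R * (De * L) by rewrite ler_wpM2l //; nra.
rewrite -natr1; nra.
Qed.

End ParameterBounds.

Section Parts.
Variables (R : realType) (delta s k : nat).

Definition Slo (j : nat) : R :=
  (delta%:R - s%:R) / delta%:R + (j%:R - 1) * s%:R / (delta%:R * k%:R).
Definition Shi (j : nat) : R :=
  (delta%:R - s%:R) / delta%:R + j%:R * s%:R / (delta%:R * k%:R).

Lemma inSE j x : inS delta s k j x =
  [&& (1 <= j)%N, (j <= k)%N, Slo j <= x & if (j < k)%N then x < Shi j else x <= 1].
Proof. by []. Qed.

Lemma inS_uniq j j' (x : R) : inS delta s k j x -> inS delta s k j' x -> j = j'.
Proof.
wlog jj' : j j' / (j <= j')%N => [hw|].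
  by case/orP: (leq_total j j') => ? h h'; [|symmetry]; apply: hw.
rewrite !inSE => /and4P[_ _ lox hix] /and4P[_ j'k lox' _].
apply/eqP; rewrite eqn_leq jj' leqNgt; apply/negP => jlt.
have jk : (j < k)%N by apply: leq_trans jlt j'k.
rewrite jk in hix.
have : (j%:R * s%:R / (delta%:R * k%:R) : R) <= (j'%:R - 1) * s%:R / (delta%:R * k%:R).
  by rewrite ler_wpM2r ?invr_ge0 ?mulr_ge0 // ler_wpM2r // lerBrDr natr1 ler_nat.
move: lox' hix; rewrite /Slo /Shi; lra.
Qed.

(* Index of the part [S_j] containing [x], where [0] stands for "[x] is in [B]". *)
Definition Sindex (x : R) : 'I_k.+1 := odflt ord0 [pick j : 'I_k.+1 | inS delta s k j x].

Lemma SindexP (x : R) (j : nat) : inS delta s k j x -> nat_of_ord (Sindex x) = j.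
Proof.
move=> h; have jk : (j < k.+1)%N by case/and4P: h => _ jk _ _; rewrite ltnS.
rewrite /Sindex; case: pickP => [j0 hj0 /=|/(_ (Ordinal jk))]; last by rewrite /= h.
exact: inS_uniq hj0 h.
Qed.

Lemma Sindex_inS (x : R) : (0 < Sindex x)%N -> inS delta s k (Sindex x) x.
Proof. by rewrite /Sindex; case: pickP. Qed.

Lemma measurable_inS j : measurable [set x : R | inS delta s k j x].
Proof.
have [/andP[j1 jk]|jj] := boolP [&& (1 <= j)%N & (j <= k)%N]; last first.
  have -> : [set x : R | inS delta s k j x] = set0.
    by apply/seteqP; split => x //=; rewrite inSE => /and4P[a b _ _]; rewrite a b in jj.
  exact: measurable0.
case: (boolP (j < k)%N) => jlt.
  have -> : [set x : R | inS delta s k j x] = `[Slo j, Shi j[%classic.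
    by apply/seteqP; split => x /=; rewrite inSE in_itv /= j1 jk jlt.
  exact: measurable_itv.
have -> : [set x : R | inS delta s k j x] = `[Slo j, 1]%classic.
  by apply/seteqP; split => x /=; rewrite inSE in_itv /= j1 jk (negbTE jlt).
exact: measurable_itv.
Qed.

Lemma Sindex_fiber_pos (j : 'I_k.+1) : (0 < j)%N ->
  Sindex @^-1` [set j] = [set x | inS delta s k j x].
Proof.
move=> j0; apply/seteqP; split => x /=.
  by move=> hx; rewrite -hx; apply: Sindex_inS; rewrite hx.
by move=> h; apply: val_inj => /=; apply: SindexP.
Qed.

Lemma Sindex_fiber0 :
  Sindex @^-1` [set ord0] = \bigcap_(j in [set: 'I_k.+1]) ~` [set x | inS delta s k j x].
Proof.
apply/seteqP; split => x /=.
  move=> hx j _ /= hj; have := SindexP hj; rewrite hx /= => j0.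
  by move: hj; rewrite -j0.
move=> h; apply: val_inj => /=.
by case: (posnP (Sindex x)) => // /Sindex_inS hx; case: (h (Sindex x) I).
Qed.

Lemma measurable_Sindex_fiber j : measurable (Sindex @^-1` [set j]).
Proof.
case: (posnP j) => j0; last by rewrite Sindex_fiber_pos //; exact: measurable_inS.
have -> : j = ord0 by apply: val_inj.
rewrite Sindex_fiber0; apply: fin_bigcap_measurable; first exact: finite_finset.
by move=> i _; apply: measurableC; exact: measurable_inS.
Qed.

Definition Swidth : R := s%:R / (delta%:R * k%:R).

Hypotheses (delta_gt0 : (0 < delta)%N) (k_gt0 : (0 < k)%N).

Lemma Sindex_fiber_sub_itv (j : 'I_k.+1) : (0 < j)%N ->
  Sindex @^-1` [set j] `<=` `[Slo j, Slo j + Swidth]%classic.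
Proof.
have D0 : (delta%:R : R) != 0 by rewrite pnatr_eq0 -lt0n.
have k0 : (k%:R : R) != 0 by rewrite pnatr_eq0 -lt0n.
move=> j0; rewrite Sindex_fiber_pos // => x /=; rewrite inSE => /and4P[_ jk lox hx].
rewrite in_itv /= lox /=; case: ifP hx => jlt hx.
  apply/ltW/(lt_le_trans hx); rewrite le_eqVlt; apply/orP; left; apply/eqP.
  by rewrite /Shi /Slo /Swidth; field; rewrite ?D0 ?k0 ?mulf_neq0.
apply: (le_trans hx).
have -> : j = k :> nat by apply/eqP; rewrite eqn_leq jk leqNgt jlt.
rewrite le_eqVlt; apply/orP; left; apply/eqP.
by rewrite /Slo /Swidth; field; rewrite D0 k0.
Qed.

End Parts.

Section UniformProbability.
Local Open Scope ereal_scope.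
Variable R : realType.

Lemma uniform_prob01_le_lebesgue (U : set R) : measurable U ->
  uniform_prob (@ltr01 R) U <= lebesgue_measure U.
Proof.
move=> mU; rewrite /uniform_prob.
apply: (@le_trans _ _ (\int[lebesgue_measure]_(x in U) cst 1 x)); last first.
  by rewrite integral_cst // mul1e.
apply: ge0_le_integral => //.
- by move=> x _; rewrite lee_fin uniform_pdf_ge0.
- apply/measurable_EFinP; apply: measurable_funTS; exact: measurable_uniform_pdf.
- by move=> x _; rewrite /= lee_fin /uniform_pdf; case: ifP => _ //; rewrite subr0 invr1.
Qed.

Lemma lebesgue_measure_itv_add_le (a w : R) : (0 <= w)%R ->
  lebesgue_measure `[a, (a + w)%R]%classic <= w%:E.
Proof.
move=> w0; rewrite lebesgue_measure_itv /=; case: ifP => _; last by rewrite lee_fin.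
by rewrite -EFinD lee_fin addrC addKr.
Qed.

End UniformProbability.

Lemma measure_big_setU_fin d (Omega : measurableType d) (R : realType)
    (mu : {measure set Omega -> \bar R}) (I : finType) (F : I -> set Omega) (G : pred I) :
  (forall i, measurable (F i)) -> (forall i j, i != j -> F i `&` F j = set0) ->
  mu (\big[setU/set0]_(i | G i) F i) = (\sum_(i | G i) mu (F i))%E.
Proof.
move=> mF dF.
rewrite (eq_bigl (fun i => predT i && G i)) // [in RHS](eq_bigl (fun i => predT i && G i)) //.
rewrite !(big_enum_val_cond G) measure_bigsetU_ord // => a b _ _ [x [xa xb]].
apply: enum_val_inj; apply/eqP/negP => /negP ab.
by have := dF _ _ ab; rewrite -subset0 => /(_ x); apply.
Qed.

Section Atoms.
Context d (Omega : measurableType d) (R : realType) (P : probability Omega R)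
  (V I : finType) (cl : R -> I) (X : V -> {RV P >-> R}).
Hypotheses (measurable_cl_fiber : forall j, measurable (cl @^-1` [set j]))
  (indep : mutually_independent X).

Lemma measurable_preimage_fiber u j : measurable (X u @^-1` (cl @^-1` [set j])).
Proof.
have := measurable_funP (X u) measurableT _ (measurable_cl_fiber j).
by rewrite setTI.
Qed.

Definition atom (f : {ffun V -> I}) : set Omega :=
  \bigcap_(u in [set u | u \in [set: V]%SET]) (X u @^-1` (cl @^-1` [set f u])).

Lemma measurable_atom f : measurable (atom f).
Proof.
apply: fin_bigcap_measurable; first exact: finite_finset.
by move=> u _; apply: measurable_preimage_fiber.
Qed.

Lemma atomP f w : atom f w <-> forall u, cl (X u w) = f u.
Proof.
split; first by move=> h u; apply: (h u); rewrite /= inE.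
by move=> h u _; apply: h.
Qed.

Definition fiber_prob u j : R := fine (P (X u @^-1` (cl @^-1` [set j]))).

Lemma fiber_probE u j : P (X u @^-1` (cl @^-1` [set j])) = (fiber_prob u j)%:E.
Proof.
rewrite /fiber_prob fineK // ge0_fin_numE //.
by apply: (le_lt_trans (probability_le1 P (measurable_preimage_fiber u j))); rewrite ltry.
Qed.

Lemma fiber_prob_ge0 u j : 0 <= fiber_prob u j.
Proof. by rewrite -lee_fin -fiber_probE. Qed.

Lemma sum_fiber_prob u : \sum_j fiber_prob u j = 1.
Proof.
have cover : [set: Omega] = \big[setU/set0]_(j | xpredT j) (X u @^-1` (cl @^-1` [set j])).
  by apply/seteqP; split => // w _; rewrite (bigD1 (cl (X u w))) //=; left.
have := probability_setT P; rewrite cover measure_big_setU_fin; last 2 first.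
- by move=> j; apply: measurable_preimage_fiber.
- move=> j j' jj'; apply/seteqP; split => // w [/= h h'].
  by move/negP: jj'; apply; rewrite -h h'.
rewrite (eq_bigr (fun j => (fiber_prob u j)%:E)); last by move=> j _; exact: fiber_probE.
by rewrite sumEFin => -[<-].
Qed.

Lemma probability_atom f : P (atom f) = (\prod_u fiber_prob u (f u))%:E.
Proof.
rewrite /atom (indep [set: V]%SET (fun u => measurable_cl_fiber (f u))) -prodEFin.
by apply: eq_big => [u|u _]; [rewrite inE | exact: fiber_probE].
Qed.

Lemma probability_big_setU_atom (G : pred {ffun V -> I}) :
  P (\big[setU/set0]_(f | G f) atom f) = (\sum_(f | G f) \prod_u fiber_prob u (f u))%:E.
Proof.
rewrite measure_big_setU_fin; last 2 first.
- exact: measurable_atom.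
- move=> f f' ff'; apply/seteqP; split => // w [/atomP h /atomP h'].
  by move/negP: ff'; apply; apply/eqP/ffunP => u; rewrite -h h'.
by rewrite -sumEFin; apply: eq_bigr => f _; exact: probability_atom.
Qed.

Lemma sum_prod_fiber_prob : \sum_(f : {ffun V -> I}) \prod_u fiber_prob u (f u) = 1.
Proof.
rewrite -(bigA_distr_bigA (fun u j => fiber_prob u j)) big1 // => u _.
exact: sum_fiber_prob.
Qed.

End Atoms.

Section Claim.
Variables (R : realType) (eps : R) (T : finType) (e : rel T) (delta s k : nat).
Variables (d : measure_display) (Omega : measurableType d) (P : probability Omega R).
Variables (X : T -> {RV P >-> R}).

Local Notation N := (#|T|%:R : R).
Local Notation Sindex := (@Sindex R delta s k).
Let measurable_fiber := @measurable_Sindex_fiber R delta s k.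
Local Notation p := (fiber_prob Sindex X).

Definition overlap v (i : nat) u (j : 'I_k.+1) : bool :=
  [&& u != v, (0 < j)%N &
  `[< inter_nonempty (Ilo delta s eps #|T| (deg e v) i) (Ihi R delta s (deg e v) i)
       (Ilo delta s eps #|T| (deg e u) j) (Ihi R delta s (deg e u) j) >]].

Definition Lassign (f : {ffun T -> 'I_k.+1}) v (i : nat) : {set T} :=
  [set u | overlap v i u (f u)]%SET.

Definition Lbound v : R :=
  42%:R * N * (deg e v)%:R * ln N / (k%:R * delta%:R `^ (1 + eps)).

Definition good_assign (f : {ffun T -> 'I_k.+1}) : bool :=
  [forall v, (0 < f v)%N ==> (#|Lassign f v (f v)|%:R <= Lbound v)].

Lemma Lset_Lassign w v i :
  Lset delta s k eps e (fun u => X u w) v i = Lassign [ffun u => Sindex (X u w)] v i.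
Proof.
apply/setP => u; rewrite !inE ffunE /overlap; apply/asboolP/and3P.
  move=> [uv [j [hj hint]]]; have hu := SindexP hj.
  by split; [exact/eqP | rewrite hu; case/and4P: hj | apply/asboolP; rewrite hu].
move=> [uv ipos /asboolP hint]; split; first exact/eqP.
by exists (Sindex (X u w)); split => //; exact: Sindex_inS.
Qed.

Lemma event_eq_good_atoms :
  [set w | forall (v : T) (i : nat), inS delta s k i (X v w) ->
     (#|Lset delta s k eps e (fun u => X u w) v i|%:R : R) <= Lbound v]
  = \big[setU/set0]_(f | good_assign f) atom Sindex X f.
Proof.
apply/seteqP; split.
  move=> w hw; rewrite (bigD1 [ffun u => Sindex (X u w)]) /=.
    by left; apply/atomP => u; rewrite ffunE.
  apply/forallP => v; apply/implyP; rewrite ffunE => pos.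
  by rewrite -Lset_Lassign; apply: hw; exact: Sindex_inS.
elim/big_ind: _ => [//|A B hA hB w [/hA|/hB]//|f good_f w /atomP hw v i hi].
have ef : f = [ffun u => Sindex (X u w)] by apply/ffunP => u; rewrite ffunE hw.
rewrite Lset_Lassign -ef; have := SindexP hi; rewrite hw => fv.
move/forallP: good_f => /(_ v) /implyP; rewrite fv; apply.
by case/and4P: hi.
Qed.

Lemma bad_assign_prob_le_chernoff :
  \sum_(f | ~~ good_assign f) \prod_u p u (f u) <=
  \sum_v \sum_(i : 'I_k.+1) expR (\sum_u \sum_(j | overlap v i u j) p u j - Lbound v / 2).
Proof.
have p_ge0 := fiber_prob_ge0 X measurable_fiber.
have prod_ge0 (f : {ffun T -> 'I_k.+1}) : 0 <= \prod_u p u (f u) by apply: prodr_ge0.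
apply: (@le_trans _ _ (\sum_v \sum_(i : 'I_k.+1)
   \sum_(f : {ffun T -> 'I_k.+1} | Lbound v < #|Lassign f v i|%:R) \prod_u p u (f u)));
  last first.
  apply: ler_sum => v _; apply: ler_sum => i _; apply: chernoff_ffun => //.
  exact: sum_fiber_prob measurable_fiber.
apply: (@le_trans _ _ (\sum_(f : {ffun T -> 'I_k.+1}) \sum_v \sum_(i : 'I_k.+1)
   (if Lbound v < #|Lassign f v i|%:R then \prod_u p u (f u) else 0))).
  rewrite big_mkcond /=; apply: ler_sum => f _; case: ifP => bad; last first.
    by apply: sumr_ge0 => v _; apply: sumr_ge0 => i _; case: ifP.
  move: bad => /forallPn [v]; rewrite negb_imply -ltNge => /andP[_ hlt].
  rewrite [leRHS](bigD1 v) //= [X in _ <= X + _](bigD1 (f v)) //= hlt -addrA lerDl.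
  by apply: addr_ge0; apply: sumr_ge0 => *; [|apply: sumr_ge0 => *]; case: ifP.
rewrite exchange_big /=; apply: ler_sum => v _; rewrite exchange_big /=.
by apply: ler_sum => i _; rewrite [in leRHS]big_mkcond.
Qed.

Hypothesis unif : forall v, uniform01 (X v).
Hypotheses (eps_gt0 : 0 < eps) (eps_lt : eps < 4%:R^-1).
Hypothesis n_large : expR (expR 100) < N.
Hypothesis delta_large : ln N `^ (2%:R / eps) * ln (ln N) `^ (1 / eps) <= delta%:R.
Hypothesis s_def : (s%:R : R) = delta%:R `^ (2%:R^-1 + eps).
Hypothesis k_def : (k%:R : R) = delta%:R `^ (2%:R^-1 - eps) / ln (ln N).
Hypothesis delta_min : is_min_degree e delta.

Local Notation D := (delta%:R : R).
Local Notation De := (D `^ eps).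

Let delta_pos : (0 < delta)%N.
Proof. exact: delta_gt0 eps_gt0 n_large delta_large. Qed.

Let k_pos : (0 < k)%N.
Proof. exact: k_gt0 eps_gt0 n_large delta_large k_def. Qed.

Let De_gt0 : 0 < De.
Proof. by rewrite powR_gt0 // ltr0n. Qed.

Lemma fiber_prob_le_Swidth u (j : 'I_k.+1) : (0 < j)%N -> p u j <= Swidth R delta s k.
Proof.
move=> j0; rewrite -lee_fin -(fiber_probE X measurable_fiber).
rewrite -[P _]/(distribution P (X u) (Sindex @^-1` [set j])) unif //.
apply: (le_trans (uniform_prob01_le_lebesgue (measurable_fiber _))).
apply: (le_trans _ (lebesgue_measure_itv_add_le (Slo R delta s k j) _)); last first.
  by rewrite divr_ge0 ?mulr_ge0.
apply: le_measure; rewrite ?inE; [exact: measurable_fiber|exact: measurable_itv|].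
exact: Sindex_fiber_sub_itv.
Qed.

(* With [A = 4 s / D], [H = 3 s / D] and [c = 34 ln n / D^eps], the interval
   [I_{u,j}] is [deg u * [1 - A j - c, 1 - A j + H]]. *)
Lemma card_overlap_le v (i : 'I_k.+1) u :
  (#|[set j | overlap v i u j]%SET|%:R : R)
  <= 21/10 * (3 * s%:R / D + 34 * ln N / De) / (4 * s%:R / D) + 1.
Proof.
set A := 4 * s%:R / D; set H := 3 * s%:R / D; set c := 34 * ln N / De.
have s_pos := s_gt0 eps_gt0 n_large delta_large s_def.
have k1 := k_ge1 eps_gt0 n_large delta_large k_def.
have skL := s_k_lnlnE eps_gt0 n_large delta_large s_def k_def.
have L100 := lnln_n_ge100 n_large.
have D0 : 0 < D by rewrite ltr0n.
have A0 : 0 < A by rewrite divr_gt0 // mulr_gt0.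
have H0 : 0 <= H by rewrite divr_ge0 ?mulr_ge0 // ltW.
have kL : 100 <= (k%:R : R) * ln (ln N) by nra.
have H1 : H <= 3/100 by rewrite ler_pdivrMr // -skL; nra.
have c0 : 0 <= c.
  by rewrite divr_ge0 ?mulr_ge0 ?ltW //; have := ln_n_ge100 n_large; lra.
have c1 : c <= 1/100 by rewrite ler_pdivrMr // ln_n_le_powR.
have Ai : A * i%:R <= 4/100.
  have : (s%:R : R) * i%:R <= s%:R * k%:R.
    by apply: ler_wpM2l; [exact: ltW | rewrite ler_nat -ltnS].
  have : (s%:R : R) * k%:R * 100 <= s%:R * k%:R * ln (ln N).
    by rewrite ler_wpM2l // mulr_ge0 // ltW.
  move=> skL100 si_le; rewrite /A mulrAC ler_pdivrMr // -skL; nra.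
have du0 : 0 < ((deg e u)%:R : R) by rewrite ltr0n (leq_trans delta_pos (delta_min.1 u)).
apply: (card_overlapping_indices A0 H0 H1 c0 c1 Ai du0 (ler0n _ (deg e v))).
move=> j /and3P[_ _ /asboolP [y [/andP[h1 h2] /andP[h3 h4]]]].
move: h1 h2 h3 h4; rewrite /Ilo /Ihi /A /H /c => *; split; lra.
Qed.

Lemma overlap_fiber_prob_le v (i : 'I_k.+1) u :
  \sum_(j | overlap v i u j) p u j
  <= 2575/1000 * Swidth R delta s k + 525/1000 * (34 * ln N / De) / k%:R.
Proof.
have s_pos := s_gt0 eps_gt0 n_large delta_large s_def.
have D0 : 0 < D by rewrite ltr0n.
have k0 : (k%:R : R) != 0 by rewrite pnatr_eq0 -lt0n.
apply: (@le_trans _ _ (\sum_(j | overlap v i u j) Swidth R delta s k)).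
  by apply: ler_sum => j /and3P[_ j0 _]; exact: fiber_prob_le_Swidth.
rewrite (eq_bigl (fun j => j \in [set j | overlap v i u j]%SET)); last by move=> j; rewrite inE.
have w0 : 0 <= Swidth R delta s k by rewrite divr_ge0 ?mulr_ge0.
rewrite sumr_const -[leLHS]mulr_natr.
apply: (le_trans (ler_wpM2l w0 (card_overlap_le v i u))).
by rewrite le_eqVlt; apply/orP; left; apply/eqP; rewrite /Swidth; field;
  rewrite ?k0 ?(gt_eqF s_pos) ?(gt_eqF D0) ?(gt_eqF De_gt0).
Qed.

Lemma chernoff_exponent_overlap_le v (i : 'I_k.+1) :
  \sum_u \sum_(j | overlap v i u j) p u j - Lbound v / 2 <= -4 * ln N.
Proof.
have Dle : (delta <= #|T|)%N by case: delta_min => _ [w <-]; exact: max_card.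
have mean_le : \sum_u \sum_(j | overlap v i u j) p u j
    <= N * (2575/1000 * Swidth R delta s k + 525/1000 * (34 * ln N / De) / k%:R).
  apply: le_trans (ler_sum _ (fun u _ => overlap_fiber_prob_le v i u)) _.
  by rewrite sumr_const -[leLHS]mulr_natr mulrC.
apply: le_trans (lerB mean_le (lexx _)) _.
rewrite /Lbound /Swidth powRD ?powRr1 ?ler0n //; last first.
  by rewrite pnatr_eq0 -lt0n delta_pos implybT.
have l1 : 1 <= ln N by have := ln_n_ge100 n_large; lra.
have Ddv : D <= (deg e v)%:R by rewrite ler_nat; case: delta_min.
have DN : D <= N by rewrite ler_nat.
have D0 : 0 < D by rewrite ltr0n.
exact: (chernoff_exponent_le D0 (s_gt0 eps_gt0 n_large delta_large s_def)
  (k_ge1 eps_gt0 n_large delta_large k_def) (lnln_n_ge100 n_large) l1 De_gt0 Ddv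
  (s_powR_le eps_gt0 eps_lt n_large delta_large s_def)
  (k_powR_lnln_le eps_gt0 n_large delta_large k_def) DN).
Qed.

Lemma bad_assign_prob_le : \sum_(f | ~~ good_assign f) \prod_u p u (f u) <= (N ^+ 2)^-1.
Proof.
have N0 : 0 < N by apply: lt_trans n_large; exact: expR_gt0.
have Dle : (delta <= #|T|)%N by case: delta_min => _ [w <-]; exact: max_card.
apply: (le_trans bad_assign_prob_le_chernoff).
apply: (@le_trans _ _ (\sum_(v : T) \sum_(i : 'I_k.+1) (N ^+ 4)^-1)).
  apply: ler_sum => v _; apply: ler_sum => i _.
  have -> : (N ^+ 4)^-1 = expR (-4 * ln N).
    by rewrite mulNr expRN expRM_natl lnK // posrE.
  by rewrite ler_expR chernoff_exponent_overlap_le.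
rewrite !sumr_const card_ord -[leLHS]mulr_natr -[_ *+ k.+1]mulr_natr.
rewrite (eq_card (B := T)) //.
have kN := kS_le_n eps_gt0 n_large delta_large k_def Dle.
apply: (@le_trans _ _ ((N ^+ 4)^-1 * N * N)).
  apply: (ler_wpM2r (ltW N0)); apply: ler_wpM2l kN.
  by rewrite invr_ge0 exprn_ge0 // ltW.
by rewrite le_eqVlt; apply/orP; left; apply/eqP; field; rewrite gt_eqF.
Qed.

End Claim.

Theorem claim5p3 (R : realType) (eps : R) :
  0 < eps -> eps < 4%:R^-1 ->
  exists n0 : nat,
  forall (T : finType) (e : rel T) (delta s k : nat),
    simple_graph e ->
    (n0 <= #|T|)%N ->
    is_min_degree e delta ->
    (ln (#|T|%:R : R)) `^ (2%:R / eps) * (ln (ln (#|T|%:R : R))) `^ (1 / eps)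
      <= delta%:R ->
    (s%:R : R) = delta%:R `^ (2%:R^-1 + eps) ->
    (k%:R : R) = delta%:R `^ (2%:R^-1 - eps) / ln (ln (#|T|%:R : R)) ->
  forall (d : measure_display) (Omega : measurableType d)
         (P : probability Omega R) (X : T -> {RV P >-> R}),
    mutually_independent X ->
    (forall v, uniform01 (X v)) ->
    ((1 - (#|T|%:R ^+ 2)^-1)%:E <=
     P [set w | forall (v : T) (i : nat), inS delta s k i (X v w) ->
          ((#|Lset delta s k eps e (fun u => X u w) v i|%:R : R)
            <= 42%:R * #|T|%:R * (deg e v)%:R * ln (#|T|%:R : R)
               / (k%:R * delta%:R `^ (1 + eps)))%R])%E.
Proof.
move=> eps_gt0 eps_lt; exists (Num.bound (expR (expR 100) : R)).
move=> T e delta s k _ n_ge delta_min delta_large s_def k_def d Omega P X indep unif.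
have n_large : expR (expR 100) < (#|T|%:R : R).
  by apply: (lt_le_trans (archi_boundP (expR_ge0 _))); rewrite ler_nat.
have measurable_fiber := @measurable_Sindex_fiber R delta s k.
rewrite (event_eq_good_atoms eps e delta s k X).
rewrite (probability_big_setU_atom measurable_fiber indep) lee_fin.
have := sum_prod_fiber_prob X measurable_fiber; rewrite (bigID (@good_assign _ eps _ e delta s k)) /=.
have := bad_assign_prob_le unif eps_gt0 eps_lt n_large delta_large s_def k_def delta_min.
lra.
Qed.
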